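(* Let $C$ be the set of numbers $\sum_{n\ge1}c_n10^{-n}$ with all $c_n\in\{0,1\}$, and $D$ the set of numbers $\sum_{n\ge1}d_n10^{-n}$ with all $d_n\in\{0,2\}$. Then there is no set $E\subset C$ of positive Hausdorff dimension together with $a\in\mathbb{R}$ such that $E+a\subset D$. *)

From Stdlib Require Import Reals.
Open Scope R_scope.

(* r^s for r >= 0 and s > 0, with the convention 0^s = 0. *)
Definition rpow (r s : R) : R := if Rle_dec r 0 then 0 else Rpower r s.

(* C = { sum_{n>=1} c_n 10^{-n} : c_n in {0,1} }  (term index n here = paper's n+1) *)
Definition setC (x : R) : Prop :=
  exists c : nat -> R, (forall n, c n = 0 \/ c n = 1) /\
    infinite_sum (fun n => c n / 10 ^ (S n)) x.

Definition setD (x : R) : Prop :=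
  exists d : nat -> R, (forall n, d n = 0 \/ d n = 2) /\
    infinite_sum (fun n => d n / 10 ^ (S n)) x.

(* H^s(E) = 0, with H^s = sup_{delta>0} H^s_delta and
   H^s_delta(E) = inf { sum_i diam(U_i)^s : E ⊆ ∪ U_i, diam U_i <= delta }. *)
Definition hausdorff_null (s : R) (E : R -> Prop) : Prop :=
  forall delta eps : R, 0 < delta -> 0 < eps ->
    exists (U : nat -> R -> Prop) (r : nat -> R),
      (forall x, E x -> exists i, U i x) /\
      (forall i, 0 <= r i <= delta) /\
      (forall i x y, U i x -> U i y -> Rabs (x - y) <= r i) /\
      (forall N, sum_f_R0 (fun i => rpow (r i) s) N <= eps).

Definition is_hausdorff_dim (E : R -> Prop) (d : R) : Prop :=
  (forall s, 0 < s -> hausdorff_null s E -> d <= s) /\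
  (forall b, (forall s, 0 < s -> hausdorff_null s E -> b <= s) -> b <= d).

From Stdlib Require Import Reals Lra.
From Coquelicot Require Import Coquelicot.
Open Scope R_scope.

(* If x, y lie in E, then x, y are in C and x + a, y + a are in
   D, so 0 = (x - (x + a)) - (y - (y + a)) is a decimal expansion
   sum_n g_n 10^(-n-1) whose "digits" g_n = (c_n - d_n) - (c'_n - d'_n) are
   either 0 or of absolute value between 1 and 3.  Such an expansion of 0 has
   all digits zero: the tail after the first digit is at most 3/90 < 1/10 in
   absolute value, so it cannot compensate a nonzero first digit; then shift
   and repeat.  A vanishing digit forces c_n = c'_n, hence x = y.
   So E has at most one point, is therefore Hausdorff-null in every dimension,
   and its Hausdorff dimension cannot be positive. *)

Definition decimal (g : nat -> R) (n : nat) : R := g n / 10 ^ S n.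

Lemma series_geom_bound (b : nat -> R) (K l : R) :
  (forall n, Rabs (b n) <= K * (/ 10) ^ n) -> is_series b l -> Rabs l <= 10 / 9 * K.
Proof.
  intros Hb Hl.
  assert (Hgeom : is_series (fun n => K * (/ 10) ^ n) (K * / (1 - / 10))).
  { apply (is_series_scal_l K (fun n => (/ 10) ^ n)), is_series_geom.
    rewrite Rabs_right; lra. }
  assert (Habs : ex_series (fun n => Rabs (b n))).
  { apply (@ex_series_le R_AbsRing R_CompleteNormedModule _ (fun n => K * (/ 10) ^ n));
      [|eexists; exact Hgeom].
    intros n; change norm with Rabs; simpl; rewrite Rabs_Rabsolu; apply Hb. }
  rewrite <- (is_series_unique b l Hl).
  eapply Rle_trans; [exact (Series_Rabs b Habs)|].
  eapply Rle_trans.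
  - apply (Series_le _ (fun n => K * (/ 10) ^ n)); [|eexists; exact Hgeom].
    intros n; split; [apply Rabs_pos | apply Hb].
  - rewrite (is_series_unique _ _ Hgeom). apply Req_le. field.
Qed.

Lemma decimal_shift (g : nat -> R) (l : R) :
  is_series (decimal g) l -> is_series (decimal (fun n => g (S n))) (10 * l - g 0%nat).
Proof.
  intros Hl.
  assert (Hshift : is_series (fun n => decimal g (S n)) (l - g 0%nat / 10)).
  { apply is_series_incr_1.
    match goal with |- is_series _ ?L => replace L with l; [exact Hl|] end.
    unfold decimal; change plus with Rplus; simpl; field. }
  apply (is_series_scal_l 10) in Hshift.
  replace (10 * l - g 0%nat) with (scal 10 (l - g 0%nat / 10))
    by (change scal with Rmult; simpl; field).
  eapply is_series_ext; [|exact Hshift].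
  intros n; unfold decimal; change scal with Rmult; simpl.
  field; apply pow_nonzero; lra.
Qed.

Definition separated_digits (M : R) (g : nat -> R) : Prop :=
  forall n, (g n = 0 \/ 1 <= Rabs (g n)) /\ Rabs (g n) <= M.

(* For M < 9, the first digit of such an expansion of 0 vanishes: the tail
   after it has absolute value at most M/90 < 1/10. *)
Lemma decimal_zero_first_digit (M : R) (g : nat -> R) :
  M < 9 -> separated_digits M g -> is_series (decimal g) 0 -> g 0%nat = 0.
Proof.
  intros HM Hg H0.
  pose proof (decimal_shift g 0 H0) as Htail.
  replace (10 * 0 - g 0%nat) with (- g 0%nat) in Htail by ring.
  assert (Hbound : Rabs (- g 0%nat) <= 10 / 9 * (M / 10)).
  { refine (series_geom_bound _ _ _ _ Htail); intros n.
    assert (Hp : 0 < 10 ^ n) by (apply pow_lt; lra).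
    pose proof (proj2 (Hg (S n))) as HgM.
    unfold decimal; simpl pow.
    rewrite Rabs_div, (Rabs_right (10 * _)), pow_inv by (apply Rgt_not_eq || apply Rle_ge; nra).
    apply (Rmult_le_reg_r (10 * 10 ^ n)); [lra|].
    field_simplify; lra. }
  rewrite Rabs_Ropp in Hbound.
  destruct (Hg 0%nat) as [[|] _]; lra.
Qed.

Lemma decimal_zero_digits (M : R) (k : nat) : M < 9 -> forall g : nat -> R,
  separated_digits M g -> is_series (decimal g) 0 -> g k = 0.
Proof.
  intros HM; induction k as [|k IH]; intros g Hg H0.
  - exact (decimal_zero_first_digit M g HM Hg H0).
  - pose proof (decimal_zero_first_digit M g HM Hg H0) as Hg0.
    apply (IH (fun n => g (S n))); [intros n; apply Hg|].
    pose proof (decimal_shift g 0 H0) as Hshift.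
    rewrite Hg0 in Hshift; replace (10 * 0 - 0) with 0 in Hshift by ring.
    exact Hshift.
Qed.

Lemma digit_difference (c c' d d' : R) :
  (c = 0 \/ c = 1) -> (c' = 0 \/ c' = 1) -> (d = 0 \/ d = 2) -> (d' = 0 \/ d' = 2) ->
  ((c - d) - (c' - d') = 0 \/ 1 <= Rabs ((c - d) - (c' - d'))) /\
  Rabs ((c - d) - (c' - d')) <= 3 /\
  ((c - d) - (c' - d') = 0 -> c = c').
Proof.
  intros Hc Hc' Hd Hd'.
  destruct Hc as [->| ->]; destruct Hc' as [->| ->];
  destruct Hd as [->| ->]; destruct Hd' as [->| ->];
  unfold Rabs; destruct Rcase_abs; repeat split; lra.
Qed.

Lemma translate_C_into_D_subsingleton (E : R -> Prop) (a : R) :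
  (forall x, E x -> setC x) -> (forall x, E x -> setD (x + a)) ->
  forall x y, E x -> E y -> x = y.
Proof.
  intros HC HD x y Ex Ey.
  destruct (HC x Ex) as [c [Hc Sc]], (HC y Ey) as [c' [Hc' Sc']].
  destruct (HD x Ex) as [d [Hd Sd]], (HD y Ey) as [d' [Hd' Sd']].
  apply is_series_Reals in Sc, Sc', Sd, Sd'.
  set (g := fun n => (c n - d n) - (c' n - d' n)).
  assert (Hzero : is_series (decimal g) 0).
  { pose proof (is_series_minus _ _ _ _ (is_series_minus _ _ _ _ Sc Sd)
                (is_series_minus _ _ _ _ Sc' Sd')) as H.
    replace 0 with (minus (minus x (x + a)) (minus y (y + a))) by (cbn; ring).
    eapply is_series_ext; [|exact H].
    intros n; unfold g, decimal; cbn; field; apply pow_nonzero; lra. }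
  assert (Hdigits : forall n, c n = c' n).
  { intros n.
    destruct (digit_difference _ _ _ _ (Hc n) (Hc' n) (Hd n) (Hd' n)) as [_ [_ Hsame]].
    apply Hsame.
    apply (decimal_zero_digits 3 n ltac:(lra) g); [|exact Hzero].
    intros m; split; apply (digit_difference _ _ _ _ (Hc m) (Hc' m) (Hd m) (Hd' m)). }
  rewrite <- (is_series_unique _ _ Sc), <- (is_series_unique _ _ Sc').
  apply Series_ext; intros n; rewrite Hdigits; reflexivity.
Qed.

(* A set with at most one point is H^s-null for every s: cover it by itself,
   a set of diameter 0. *)
Lemma hausdorff_null_subsingleton (s : R) (E : R -> Prop) :
  (forall x y, E x -> E y -> x = y) -> hausdorff_null s E.
Proof.
  intros Hsub delta eps Hdelta Heps.
  exists (fun _ => E), (fun _ => 0).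
  split; [|split; [|split]].
  - intros x Ex; exists 0%nat; exact Ex.
  - intros; lra.
  - intros i x y Ex Ey; rewrite (Hsub x y Ex Ey), Rminus_diag, Rabs_R0; lra.
  - intros N.
    assert (Hzero : forall m, sum_f_R0 (fun _ => rpow 0 s) m = 0).
    { unfold rpow; destruct (Rle_dec 0 0) as [_|]; [|lra].
      induction m as [|m IH]; simpl; [reflexivity|rewrite IH; ring]. }
    rewrite Hzero; lra.
Qed.

Theorem mainTheorem5 :
  ~ (exists (E : R -> Prop) (a d : R),
        (forall x, E x -> setC x) /\
        is_hausdorff_dim E d /\ 0 < d /\
        (forall x, E x -> setD (x + a))).
Proof.
  intros [E [a [d [HC [[Hdim _] [Hd HD]]]]]].
  pose proof (translate_C_into_D_subsingleton E a HC HD) as Hsub.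
  pose proof (hausdorff_null_subsingleton (d / 2) E Hsub) as Hnull.
  pose proof (Hdim (d / 2) ltac:(lra) Hnull) as Hle.
  lra.
Qed.
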